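(* Let $k\ge 2$ be an integer and let $G$ be a finite simple connected graph of order $n\ge k$. Then $$W_{tsp,k}(G)\le k\binom{n}{k}\mu(G)=\frac{2}{k-1}\binom{n-2}{k-2}W(G).$$ Equality holds if and only if $k\in\{2,3\}$, or $k>3$ and $G$ is the star $S_n$ or the complete graph $K_n$.
   Context: $d(u,v)$ is the graph distance; $W(G)=\sum_{\{u,v\}\subseteq V}d(u,v)$ is the Wiener index and $\mu(G)=W(G)/\binom{n}{2}$ the average distance. For a set $S$ of $k$ vertices, $\mathrm{tsp}_k(S)$ is the length (number of edge traversals, with multiplicity) of a shortest closed walk in $G$ visiting all vertices of $S$, and $W_{tsp,k}(G)=\sum_{S\subseteq V,\,|S|=k}\mathrm{tsp}_k(S)$. $S_n$ denotes the star $K_{1,n-1}$. *)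

From Stdlib Require Import ClassicalEpsilon.
From mathcomp Require Import all_boot all_order all_algebra.
Set Implicit Arguments. Unset Strict Implicit. Unset Printing Implicit Defensive.
Import Order.TTheory GRing.Theory Num.Theory.

(* Least natural number satisfying P (meaningful when P is inhabited,
   which is always the case below since the graph is connected). *)
Definition nat_min (P : nat -> Prop) : nat :=
  epsilon (inhabits 0%N) (fun m => P m /\ forall j, P j -> (m <= j)%N).

Section Graph.
Variables (T : finType) (e : rel T).

Definition dist (u v : T) : nat :=
  nat_min (fun m => exists p : seq T, [/\ path e u p, last u p = v & size p = m]).

Definition tsp (S : {set T}) : nat :=
  nat_min (fun m => exists (x : T) (p : seq T),
    [/\ path e x p, last x p = x, {subset S <= x :: p} & size p = m]).

Definition Wiener : nat :=
  (\sum_(u : T) \sum_(v : T | enum_rank u < enum_rank v) dist u v)%N.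

Definition mu : rat := (Wiener%:R / 'C(#|T|, 2)%:R)%R.

Definition Wtsp (k : nat) : nat :=
  (\sum_(S : {set T} | #|S| == k) tsp S)%N.

Definition is_complete : Prop := forall u v : T, u != v -> e u v.

Definition is_star : Prop :=
  exists c : T, forall u v : T, u != v -> (e u v <-> (u == c) || (v == c)).

End Graph.

From Stdlib Require Import ClassicalEpsilon Classical.
From mathcomp Require Import all_boot all_order all_algebra all_fingroup.
From mathcomp Require Import zify ring.
Set Implicit Arguments. Unset Strict Implicit. Unset Printing Implicit Defensive.
Import Order.TTheory GRing.Theory Num.Theory.

(* Listing a k-set S in a cyclic order and joining consecutive points by
   shortest paths gives a closed walk through S, so tsp(S) is at most the
   length of every such tour.  Averaged over the k! orders, every ordered pair
   of distinct points of S is consecutive equally often, so (k-1) tsp(S) is at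
   most the sum of d(u,v) over the ordered pairs of S; summing over S, each
   pair lies in C(n-2,k-2) of the sets, which is the inequality.
   Equality forces equality for every k-set, hence all its tours have the same
   length.  For k >= 4, exchanging two consecutive points of a tour gives the
   four-point condition d(a,b) + d(c,w) = d(a,c) + d(b,w), which forces
   diameter at most 2 and then a star or a complete graph.  Conversely, a
   shortest closed walk through S visits S in some cyclic order, so tsp(S) is
   at least the length of some tour; all tours have the same length when
   k <= 3, and also in a star or a complete graph, where 2 d(u,v) = g(u) + g(v)
   for a vertex weight g. *)

Lemma nat_min_spec (P : nat -> Prop) :
  (exists j, P j) -> P (nat_min P) /\ forall j, P j -> nat_min P <= j.
Proof.
move=> [j Pj]; rewrite /nat_min.
apply: (epsilon_spec _ (fun m => P m /\ forall j, P j -> m <= j)).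
elim: j {-2}j (leqnn j) Pj => [|n IHn] j le_jn Pj.
  by exists j; split=> // i _; move: le_jn; rewrite leqn0 => /eqP ->.
have [[i [Pi lt_ij]]|no_smaller] := classic (exists i, P i /\ i < j).
  by apply: (IHn i) => //; lia.
exists j; split=> // i Pi; rewrite leqNgt; apply/negP => lt_ij.
by apply: no_smaller; exists i.
Qed.

Lemma sumn_pairmap_rcons (U : Type) (f : U -> U -> nat) x s y :
  sumn (pairmap f x (rcons s y)) = sumn (pairmap f x s) + f (last x s) y.
Proof. by rewrite -cats1 pairmap_cat sumn_cat /= addn0. Qed.

Lemma ordS_neq m (i : 'I_m.+2) : ordS i != i.
Proof.
apply/eqP => /(congr1 val) /=; have := ltn_ord i.
rewrite leq_eqVlt => /predU1P [eq_im|lt_im]; last by rewrite modn_small //; lia.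
by rewrite eq_im modnn => i0; move: eq_im; rewrite -i0.
Qed.

Lemma enum_set_inj (T : finType) (S : {set T}) m : #|S| = m ->
  exists2 x : 'I_m -> T, injective x & S = [set x i | i : 'I_m].
Proof.
move=> <-; exists (@enum_val _ (mem S)); first exact: enum_val_inj.
apply/setP => z; apply/idP/imsetP => [zS|[i _ ->]]; last exact: enum_valP.
by exists (enum_rank_in zS z); rewrite ?enum_rankK_in.
Qed.

Lemma card_draws_pair (T : finType) (u v : T) k : u != v ->
  #|[set S : {set T} | [&& #|S| == k.+2, u \in S & v \in S]]| = 'C(#|T|.-2, k).
Proof.
move=> uv; set P := [set u; v]; have cardP : #|P| = 2 by rewrite cards2 uv.
rewrite -[#|T|.-2](_ : #|~: P| = _) -?cards_draws; last first.
  by rewrite [#|~: P|]cardsCs setCK cardP subn2.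
pose D := [set B : {set T} | B \subset ~: P & #|B| == k].
have addPK : {in D, cancel (fun B => B :|: P) (fun S => S :\: P)}.
  move=> B; rewrite inE -disjoints_subset => /andP [BP _].
  by rewrite setDUl setDv setU0; apply/setDidPl.
rewrite -(card_in_imset (can_in_inj addPK)); apply: eq_card => S; rewrite inE.
apply/and3P/imsetP => [[cS uS vS] | [B]].
  have PS : P \subset S by rewrite subUset !sub1set uS vS.
  exists (S :\: P).
    by rewrite inE cardsDS // cardP (eqP cS) subn2 eqxx andbT setDE subsetIr.
  apply/setP => z; rewrite in_setU in_setD.
  by case: (boolP (z \in P)) => [/(subsetP PS)|]; rewrite ?orbT ?orbF.
rewrite inE -disjoints_subset => /andP [BP cB] ->.
rewrite cardsU (disjoint_setI0 BP) cards0 subn0 cardP (eqP cB) addn2 eqxx.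
by rewrite !inE !eqxx !orbT.
Qed.

Lemma sum_perm_pair_eq m (F : 'I_m -> 'I_m -> nat) (i j i' j' : 'I_m) :
  i != j -> i' != j' ->
  \sum_(s : 'S_m) F (s i) (s j) = \sum_(s : 'S_m) F (s i') (s j').
Proof.
move=> ij ij'; pose j1 := tperm i' i j'; pose p : 'S_m := (tperm i' i * tperm j1 j)%g.
have j1i : j1 != i.
  by rewrite -(inj_eq (@perm_inj _ (tperm i' i))) /j1 tpermK tpermR eq_sym.
have pi' : p i' = i by rewrite permM tpermL tpermD // eq_sym.
have pj' : p j' = j by rewrite permM -/j1 tpermL.
rewrite [RHS](reindex_inj (mulgI p)) /=; apply: eq_bigr => s _.
by rewrite (permM p s i') (permM p s j') pi' pj'.
Qed.

Lemma sum_perm_pair m (F : 'I_m -> 'I_m -> nat) (i j : 'I_m) : i != j ->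
  (\sum_(s : 'S_m) F (s i) (s j)) * (m * m.-1) =
    m`! * \sum_(a < m) \sum_(b < m | b != a) F a b.
Proof.
move=> ij.
have perm_invariant (s : 'S_m) :
    \sum_a \sum_(b | b != a) F (s a) (s b) = \sum_a \sum_(b | b != a) F a b.
  rewrite [RHS](reindex_inj (@perm_inj _ s)); apply: eq_bigr => a _.
  rewrite [RHS](reindex_inj (@perm_inj _ s)); apply: eq_bigl => b /=.
  by rewrite (inj_eq perm_inj).
have pair_invariant (a b : 'I_m) : b != a ->
    \sum_(s : 'S_m) F (s a) (s b) = \sum_(s : 'S_m) F (s i) (s j).
  by move=> ba; apply: sum_perm_pair_eq; rewrite // eq_sym.
have -> : m`! * \sum_a \sum_(b | b != a) F a b =
    \sum_(s : 'S_m) \sum_a \sum_(b | b != a) F (s a) (s b).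
  by rewrite (eq_bigr _ (fun s _ => perm_invariant s)) sum_nat_const card_Sn.
rewrite exchange_big /=; under eq_bigr do rewrite exchange_big /=.
rewrite (eq_bigr _ (fun a _ => eq_bigr _ (pair_invariant a))).
under eq_bigr do rewrite sum_nat_const cardC1 card_ord.
by rewrite sum_nat_const card_ord [RHS]mulnA mulnC.
Qed.

Section Distance.
Variables (T : finType) (e : rel T).
Hypotheses (e_sym : symmetric e) (e_irr : irreflexive e).
Hypothesis e_conn : forall u v : T, connect e u v.
Local Notation d := (dist e).

Let walk_exists u v : exists m p, [/\ path e u p, last u p = v & size p = m].
Proof. by have /connectP [p pp ->] := e_conn u v; exists (size p), p. Qed.

Lemma dist_spec u v : exists p, [/\ path e u p, last u p = v & size p = d u v].
Proof. exact: (nat_min_spec (walk_exists u v)).1. Qed.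

Lemma dist_min u v p : path e u p -> last u p = v -> d u v <= size p.
Proof. by move=> pp lp; apply: (nat_min_spec (walk_exists u v)).2; exists p. Qed.

Lemma distxx u : d u u = 0.
Proof. by apply/eqP; rewrite -leqn0 (@dist_min u u [::]). Qed.

Lemma dist_eq0 u v : (d u v == 0) = (u == v).
Proof.
apply/eqP/eqP => [|->]; last exact: distxx.
by have [[|x p] [_ <-]] := dist_spec u v => // <-.
Qed.

Lemma dist_triangle u v w : d u w <= d u v + d v w.
Proof.
have [p [pp lp <-]] := dist_spec u v; have [q [pq lq <-]] := dist_spec v w.
by rewrite -size_cat dist_min ?cat_path ?last_cat ?lp ?pp.
Qed.

Lemma distC u v : d u v = d v u.
Proof.
suff le_d a b : d a b <= d b a by apply/eqP; rewrite eqn_leq !le_d.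
have [p [pp lp <-]] := dist_spec b a.
rewrite -(size_belast b) -size_rev; apply: dist_min.
  have e_symC : (fun x y => e y x) =2 e by move=> x y; rewrite e_sym.
  by move: pp; rewrite -rev_path lp (eq_path e_symC).
by case: p pp lp => [|x p] _ /= <-; rewrite ?rev_cons ?last_rcons.
Qed.

Lemma dist_le1 u v : e u v -> d u v <= 1.
Proof. by move=> uv; rewrite (@dist_min u v [:: v]) //= uv. Qed.

Lemma edge_neq u v : e u v -> u != v.
Proof. by apply: contraTneq => ->; rewrite e_irr. Qed.

Lemma dist_eq1 u v : (d u v == 1) = e u v.
Proof.
apply/eqP/idP => [d1|uv].
  have [p [pp lp sp]] := dist_spec u v; rewrite d1 in sp.
  by case: p pp lp sp => [|x [|y p]] //= /andP [ux _] <-.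
have := edge_neq uv; rewrite -dist_eq0; have := dist_le1 uv; lia.
Qed.

Lemma dist_step u v : 0 < d u v -> exists2 w, e u w & d w v = (d u v).-1.
Proof.
have [[|w p] [pp lp sp]] := dist_spec u v; first by rewrite -sp.
move: pp sp => /= /andP [uw pw] sp _; exists w => //; have := dist_min pw lp.
have := dist_triangle u w v; have := dist_le1 uw; lia.
Qed.

Lemma closed_walk_cover x (s : seq T) :
  exists p, [/\ path e x p, last x p = x & {subset s <= x :: p}].
Proof.
elim: s => [|y s [p [pp lp sp]]]; first by exists [::].
have /connectP [q pq yq] := e_conn x y; have /connectP [r pr xr] := e_conn y x.
exists (q ++ r ++ p); split.
- by rewrite !cat_path pq -yq pr -xr pp.
- by rewrite !last_cat -yq -xr lp.
- move=> z; rewrite inE => /predU1P [->|/sp]; rewrite !(inE, mem_cat).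
    by move: (mem_last x q); rewrite -yq inE => /orP [->|->]; rewrite ?orbT.
  by case/orP => ->; rewrite ?orbT.
Qed.

Let tour_exists (S : {set T}) (x0 : T) :
  exists m x p, [/\ path e x p, last x p = x, {subset S <= x :: p} & size p = m].
Proof.
have [p [pp lp sp]] := closed_walk_cover x0 (enum S).
by exists (size p), x0, p; split=> // z; rewrite -mem_enum => /sp.
Qed.

Lemma tsp_spec (S : {set T}) (x0 : T) : exists x p,
  [/\ path e x p, last x p = x, {subset S <= x :: p} & size p = tsp e S].
Proof. exact: (nat_min_spec (tour_exists S x0)).1. Qed.

Lemma tsp_min (S : {set T}) x p :
  path e x p -> last x p = x -> {subset S <= x :: p} -> tsp e S <= size p.
Proof.
move=> pp lp sp; apply: (nat_min_spec (tour_exists S x)).2.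
by exists x, p.
Qed.

Lemma walk_through (f : nat -> T) r : exists p,
  [/\ path e (f 0) p, last (f 0) p = f r,
      forall j, j <= r -> f j \in f 0 :: p
    & size p = \sum_(j < r) d (f j) (f j.+1)].
Proof.
elim: r => [|r [p [pp lp fp sp]]].
  by exists [::]; split=> // [j|]; rewrite ?big_ord0 // leqn0 => /eqP ->; rewrite mem_head.
have [q [pq lq sq]] := dist_spec (f r) (f r.+1).
exists (p ++ q); split.
- by rewrite cat_path pp lp.
- by rewrite last_cat lp.
- move=> j; rewrite leq_eqVlt => /predU1P [->|/fp].
    by rewrite -lq -lp -last_cat mem_last.
  by rewrite !inE mem_cat => /orP [->|->]; rewrite ?orbT.
- by rewrite size_cat big_ord_recr /= sp sq.
Qed.

Definition tour_len m (y : 'I_m -> T) : nat := \sum_(i < m) d (y i) (y (ordS i)).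

Lemma tsp_le_tour_len m (y : 'I_m.+1 -> T) (S : {set T}) :
  {subset S <= codom y} -> tsp e S <= tour_len y.
Proof.
(* Indices are read modulo m.+1, so the walk through f 0, ..., f m.+1 closes. *)
move=> sub_S; pose f j := y (inZp j).
have f_ord (i : 'I_m.+1) : f i = y i by congr y; apply: val_inj; rewrite /= modn_small.
have [p [pp lp fp sp]] := walk_through f m.+1.
apply: leq_trans (tsp_min pp _ _) _.
- by rewrite lp /f; congr y; apply: val_inj; rewrite /= modnn.
- by move=> z /sub_S /codomP [i ->]; rewrite -f_ord; apply: fp; rewrite ltnW.
- rewrite sp; apply: eq_leq; apply: eq_bigr => i _; rewrite f_ord.
  by congr (d _ (y _)); apply: val_inj.
Qed.

Definition cycle_len (s : seq T) : nat :=
  if s is x :: s' then sumn (pairmap d x (rcons s' x)) else 0.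

Lemma sumn_pairmap_dist_le u y r :
  sumn (pairmap d u r) <= d u y + sumn (pairmap d y r).
Proof. by case: r => //= z r; rewrite addnA leq_add2r dist_triangle. Qed.

Lemma walk_visit_order u p (A : {set T}) : path e u p -> {subset A <= u :: p} ->
  exists s, [/\ uniq s, s =i A & sumn (pairmap d u (rcons s (last u p))) <= size p].
Proof.
elim: p u A => [|y p IHp] u A /=.
  move=> _ A_u; exists (if u \in A then [:: u] else [::]).
  split; first by case: ifP.
    move=> z; apply/idP/idP => [|/[dup] /A_u]; last first.
      by rewrite inE => /eqP -> ->; exact: mem_head.
    by case: ifP => // uA; rewrite inE => /eqP ->.
  by case: ifP => /=; rewrite !distxx.
case/andP=> uy py A_up.
have A'_yp : {subset A :\ u <= y :: p}.
  by move=> z; rewrite !inE => /andP [zu /A_up]; rewrite inE (negbTE zu).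
have [s [us As le_s]] := IHp y (A :\ u) py A'_yp.
have le_u := leq_trans (sumn_pairmap_dist_le u y _) (leq_add (dist_le1 uy) le_s).
have [uA|uA] := boolP (u \in A).
- exists (u :: s); split=> /=.
  + by rewrite us As !inE eqxx.
  + by move=> z; rewrite inE As !inE; case: eqVneq => // ->.
  + by rewrite distxx.
- exists s; split=> // z; rewrite As !inE.
  by case: eqVneq => // ->; rewrite (negbTE uA).
Qed.

Lemma tsp_ge_cycle_len (S : {set T}) (x0 : T) :
  exists2 s, perm_eq s (enum S) & cycle_len s <= tsp e S.
Proof.
have [x [p [pp lp Sp <-]]] := tsp_spec S x0.
have [s [us Ss le_s]] := walk_visit_order pp Sp.
exists s; first by apply: uniq_perm; rewrite ?enum_uniq // => z; rewrite mem_enum Ss.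
apply: leq_trans le_s; rewrite lp.
case: s {us Ss} => //= z r; rewrite !sumn_pairmap_rcons addnCA leq_add2l.
by rewrite addnC dist_triangle.
Qed.

Definition dist_sum (S : {set T}) : nat := \sum_(u in S) \sum_(v in S) d u v.

Lemma dist_sum_perm_eq s (S : {set T}) : perm_eq s (enum S) ->
  dist_sum S = \sum_(u <- s) \sum_(v <- s) d u v.
Proof.
move=> sS; rewrite /dist_sum -big_enum -(perm_big _ sS).
by apply: eq_bigr => u _; rewrite -big_enum -(perm_big _ sS).
Qed.

Lemma cycle_len_small s : size s = 2 \/ size s = 3 ->
  cycle_len s * (size s).-1 = \sum_(u <- s) \sum_(v <- s) d u v.
Proof.
case: s => [|a [|b [|c [|x s]]]] /= size23; try by case: size23.
  by rewrite !big_cons !big_nil /= !distxx (distC b a); lia.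
by rewrite !big_cons !big_nil /= !distxx (distC b a) (distC c a) (distC c b); lia.
Qed.

Definition additive_dist (g : T -> nat) : Prop :=
  forall u v, u != v -> 2 * d u v = g u + g v.

Lemma cycle_len_additive g s : additive_dist g -> uniq s -> 1 < size s ->
  cycle_len s = \sum_(u <- s) g u.
Proof.
move=> dg; case: s => [|z [|y r]] //= /andP [zyr uyr] _.
have chain (x : T) (t : seq T) : uniq (x :: t) ->
    2 * sumn (pairmap d x t) + g (last x t) = g x + 2 * \sum_(v <- t) g v.
  elim: t x => [|v t IHt] x /=; first by rewrite big_nil; lia.
  rewrite inE negb_or => /andP [/andP [xv xt] uvt].
  by have := IHt v uvt; have := dg x v xv; rewrite big_cons; lia.
have last_z : @last T y r != z by apply: contraNneq zyr => <-; exact: mem_last.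
have zy : z != y by apply: contraNneq zyr => ->; exact: mem_head.
have := chain y r uyr; have := dg _ _ last_z; have := dg _ _ zy.
by rewrite sumn_pairmap_rcons !big_cons; lia.
Qed.

Lemma dist_sum_additive g (S : {set T}) : additive_dist g ->
  dist_sum S = #|S|.-1 * \sum_(u in S) g u.
Proof.
move=> dg; have sum_const u : u \in S -> \sum_(v in S :\ u) g u = #|S|.-1 * g u.
  by move=> uS; rewrite sum_nat_const (cardsD1 u S) uS.
have row u : u \in S -> 2 * \sum_(v in S) d u v = \sum_(v in S :\ u) (g u + g v).
  move=> uS; rewrite big_distrr (bigD1 u) //= distxx muln0 add0n.
  apply: eq_big => [v|]; first by rewrite !inE andbC.
  by move=> v /andP [_ vu]; apply: dg; rewrite eq_sym.
have swap v : v \in S ->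
    \sum_(u | (u \in S) && (v \in S :\ u)) g v = #|S|.-1 * g v.
  by move=> vS; rewrite -sum_const //; apply: eq_bigl => u; rewrite !inE vS andbT andbC eq_sym.
suff: 2 * dist_sum S = 2 * (#|S|.-1 * \sum_(u in S) g u) by lia.
rewrite /dist_sum big_distrr (eq_bigr _ row); under eq_bigr do rewrite big_split /=.
rewrite big_split /= (eq_bigr _ sum_const).
rewrite (exchange_big_dep (mem S)) /=; last by move=> u v _; rewrite !inE => /andP [].
by rewrite (eq_bigr _ swap) -big_distrr /= mul2n addnn.
Qed.

Lemma dist_sum_le_tsp (S : {set T}) :
  [\/ #|S| = 2, #|S| = 3 | 1 < #|S| /\ exists g, additive_dist g] ->
  dist_sum S <= tsp e S * #|S|.-1.
Proof.
move=> cases; have [x0 _] : exists x0, x0 \in S.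
  by apply/card_gt0P; case: cases => [->|->|[/ltnW]].
have [s sS le_s] := tsp_ge_cycle_len S x0.
have size_s : size s = #|S| by rewrite (perm_size sS) -cardE.
rewrite (dist_sum_perm_eq sS); apply: leq_trans (leq_mul le_s (leqnn _)).
case: cases => [S2|S3|[S_gt1 [g dg]]]; rewrite -size_s.
- by rewrite cycle_len_small // size_s; left.
- by rewrite cycle_len_small // size_s; right.
have us : uniq s by rewrite (perm_uniq sS) enum_uniq.
rewrite (cycle_len_additive dg us) ?size_s //.
rewrite -(dist_sum_perm_eq sS) (dist_sum_additive _ dg) mulnC.
by rewrite (perm_big _ sS) big_enum.
Qed.

Section TourAverage.
Variables (m : nat) (x : 'I_m.+2 -> T).
Hypothesis x_inj : injective x.
Local Notation S := [set x i | i : 'I_m.+2].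

Lemma sum_tour_len :
  (\sum_(s : 'S_m.+2) tour_len (x \o s)) * m.+1 = (m.+2)`! * dist_sum S.
Proof.
apply/eqP; rewrite -(eqn_pmul2l (ltn0Sn m.+1)); apply/eqP.
have dist_sumE : dist_sum S = \sum_(a < m.+2) \sum_(b < m.+2 | b != a) d (x a) (x b).
  rewrite /dist_sum big_imset /=; last by move=> a b _ _; apply: x_inj.
  apply: eq_bigr => a _; rewrite big_imset /=; last by move=> ? ? _ _; apply: x_inj.
  by rewrite (bigD1 a) //= distxx.
have -> : m.+2 * ((m.+2)`! * dist_sum S) = \sum_(i < m.+2) (m.+2)`! * dist_sum S.
  by rewrite sum_nat_const card_ord.
rewrite mulnCA /tour_len exchange_big big_distrl /=; apply: eq_bigr => i _.
rewrite dist_sumE (sum_perm_pair (fun a b => d (x a) (x b))) //.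
by rewrite eq_sym ordS_neq.
Qed.

Lemma tsp_le_tour_len_perm (s : 'S_m.+2) : tsp e S <= tour_len (x \o s).
Proof.
apply: tsp_le_tour_len => _ /imsetP [i _ ->]; apply/codomP; exists (s^-1 i)%g.
by rewrite /= permKV.
Qed.

Lemma tsp_mul_le_dist_sum_enum : tsp e S * m.+1 <= dist_sum S.
Proof.
have le_sum : \sum_(s : 'S_m.+2) tsp e S <= \sum_(s : 'S_m.+2) tour_len (x \o s).
  by apply: leq_sum => s _; apply: tsp_le_tour_len_perm.
rewrite -(leq_pmul2l (fact_gt0 m.+2)) mulnA -sum_tour_len leq_mul2r.
by rewrite -card_Sn -sum_nat_const le_sum orbT.
Qed.

Lemma tour_len_perm_eq_tsp : tsp e S * m.+1 = dist_sum S ->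
  forall s : 'S_m.+2, tour_len (x \o s) = tsp e S.
Proof.
move=> eq_S s.
have sum_eq : \sum_(s : 'S_m.+2) tsp e S == \sum_(s : 'S_m.+2) tour_len (x \o s).
  by rewrite -(eqn_pmul2r (ltn0Sn m)) sum_tour_len -eq_S sum_nat_const card_Sn mulnA.
have [_ all_eq] := leqif_sum (fun s (_ : true) => leqif_eq (tsp_le_tour_len_perm s)).
by move: sum_eq; rewrite all_eq => /forall_inP /(_ s isT) /eqP.
Qed.

End TourAverage.

Lemma tsp_mul_le_dist_sum (S : {set T}) : 1 < #|S| ->
  tsp e S * #|S|.-1 <= dist_sum S.
Proof.
move=> S_gt1; have [m cardS] : exists m, #|S| = m.+2 by exists #|S|.-2; lia.
rewrite cardS; have [x x_inj ->] := enum_set_inj cardS.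
exact: tsp_mul_le_dist_sum_enum.
Qed.

Lemma tour_len_perm1 m (y : 'I_m -> T) : tour_len (y \o (1%g : 'S_m)) = tour_len y.
Proof. by apply: eq_bigr => j _; rewrite /= !perm1. Qed.

Lemma tour_len_tperm m (y : 'I_m.+4 -> T) :
  let i k : 'I_m.+4 := inord k in
  tour_len (y \o tperm (i 1) (i 2)) + d (y (i 0)) (y (i 1)) + d (y (i 2)) (y (i 3)) =
  tour_len y + d (y (i 0)) (y (i 2)) + d (y (i 1)) (y (i 3)).
Proof.
move=> i; have val_i k : k < m.+4 -> i k = k :> nat by move=> ?; rewrite /i inordK.
have neq_i k l : k < m.+4 -> l < m.+4 -> k != l -> i k != i l.
  by move=> ? ? kl; apply: contra kl => /eqP ikl; rewrite -(val_i k) // -(val_i l) // ikl.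
have ordS_i k : k.+1 < m.+4 -> ordS (i k) = i k.+1.
  by move=> ?; apply: val_inj; rewrite /= !val_i ?modn_small // ltnW.
pose F (s : 'S_m.+4) j := d (y (s j)) (y (s (ordS j))).
pose R j := (j != i 0) && (j != i 1) && (j != i 2).
have split3 (s : 'S_m.+4) : tour_len (y \o s) =
    F s (i 0) + F s (i 1) + F s (i 2) + \sum_(j | R j) F s j.
  rewrite /tour_len (bigD1 (i 0)) // (bigD1 (i 1)) ?neq_i // (bigD1 (i 2)) ?neq_i //.
  by rewrite /= !addnA.
rewrite -[tour_len y]tour_len_perm1.
set t := tperm (i 1) (i 2).
have rest : \sum_(j | R j) F t j = \sum_(j | R j) F 1%g j.
  apply: eq_bigr => j /andP [/andP [j0 j1] j2]; rewrite /F !perm1.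
  have Sj1 : ordS j != i 1 by rewrite -ordS_i // (inj_eq (@ordS_inj _)).
  have Sj2 : ordS j != i 2 by rewrite -ordS_i // (inj_eq (@ordS_inj _)).
  by rewrite /t !tpermD // eq_sym.
have t0 : t (i 0) = i 0 by rewrite tpermD // neq_i.
have t3 : t (i 3) = i 3 by rewrite tpermD // neq_i.
rewrite !split3 rest /F !perm1 !ordS_i // t0 t3 /t tpermL tpermR.
by rewrite (distC (y (i 2))); lia.
Qed.

Definition four_point : Prop := forall a b c w : T, uniq [:: a; b; c; w] ->
  d a b + d c w = d a c + d b w.

Lemma four_point_of_tsp_eq k : k.+4 <= #|T| ->
  (forall S : {set T}, #|S| = k.+4 -> tsp e S * k.+3 = dist_sum S) -> four_point.
Proof.
move=> k_le_T tsp_eq a b c w uniq_abcw.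
pose L := [:: a; b; c; w] ++ [seq z <- enum T | z \notin [:: a; b; c; w]].
have uniq_L : uniq L.
  rewrite cat_uniq uniq_abcw filter_uniq ?enum_uniq // andbT.
  by apply/hasPn => z; rewrite mem_filter => /andP [].
have size_L : #|T| <= size L.
  rewrite -(card_uniqP uniq_L); apply/subset_leq_card/subsetP => z _.
  by rewrite mem_cat mem_filter mem_enum andbT orbN.
pose s := take k.+4 L; pose x (j : 'I_k.+4) := nth a s j.
have size_s : size s = k.+4 by rewrite size_takel // (leq_trans k_le_T).
have x_inj : injective x.
  move=> j l /eqP; rewrite /x nth_uniq ?size_s ?take_uniq // => /eqP; exact: val_inj.
have card_x : #|[set x j | j : 'I_k.+4]| = k.+4 by rewrite card_imset // card_ord.
have tour_eq := tour_len_perm_eq_tsp x_inj (tsp_eq _ card_x).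
have /= := tour_len_tperm x.
by rewrite tour_eq -[tour_len x]tour_len_perm1 tour_eq /x !inordK // !nth_take //=; lia.
Qed.

Lemma dist_le2_of_four_point : four_point -> forall u v, d u v <= 2.
Proof.
move=> fp a c; rewrite leqNgt; apply/negP => d_ac.
have [b ab bc] := dist_step (ltnW (ltnW d_ac)).
have [b' bb' b'c] : exists2 b', e b b' & d b' c = (d b c).-1.
  by apply: dist_step; rewrite bc; lia.
have dab : d a b = 1 by apply/eqP; rewrite dist_eq1.
have dbb' : d b b' = 1 by apply/eqP; rewrite dist_eq1.
have dab' : d a b' = 2.
  by have := dist_triangle a b b'; have := dist_triangle a b' c; lia.
have uniq_abb'c : uniq [:: a; b; b'; c].
  by rewrite /= !inE !negb_or -!dist_eq0 dab dab' dbb' bc b'c; lia.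
by have := fp _ _ _ _ uniq_abb'c; lia.
Qed.

Lemma four_point_midpoint a b c : four_point -> d a c = 2 -> e a b -> e b c ->
  forall x, x != a -> x != b -> x != c -> [/\ e b x, d a x = 2 & d c x = 2].
Proof.
move=> fp dac ab bc x xa xb xc.
have dab : d a b = 1 by apply/eqP; rewrite dist_eq1.
have dbc : d b c = 1 by apply/eqP; rewrite dist_eq1.
have ac : a != c by rewrite -dist_eq0 dac.
have uniq_abcx : uniq [:: a; b; c; x].
  by rewrite /= !inE !negb_or (edge_neq ab) (edge_neq bc) ac !(eq_sym _ x) xa xb xc.
have uniq_axcb : uniq [:: a; x; c; b].
  by rewrite /= !inE !negb_or (edge_neq ab) ac (eq_sym c b) (edge_neq bc) !(eq_sym _ x) xa xb xc.
have := fp _ _ _ _ uniq_abcx; have := fp _ _ _ _ uniq_axcb.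
have := dist_le2_of_four_point fp c x; have : d b x != 0 by rewrite dist_eq0 eq_sym.
rewrite (distC c b) (distC x b) dab dbc dac => dbx0 dcx2 fp1 fp2.
have dbx : d b x = 1 by lia.
by split; [rewrite -dist_eq1 dbx | lia | lia].
Qed.

Lemma four_point_star_or_complete : four_point -> is_star e \/ is_complete e.
Proof.
move=> fp; have [complete|] := boolP [forall u, forall v, (u != v) ==> e u v].
  by right => u v uv; move/forallP/(_ u)/forallP/(_ v): complete; rewrite uv.
rewrite negb_forall => /existsP [a]; rewrite negb_forall => /existsP [c].
rewrite negb_imply => /andP [ac not_ac].
have dac : d a c = 2.
  have := dist_le2_of_four_point fp a c; rewrite -dist_eq1 in not_ac.
  by rewrite -dist_eq0 in ac; lia.
have [b ab bc'] : exists2 b, e a b & d b c = (d a c).-1.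
  by apply: dist_step; rewrite dac.
have bc : e b c by rewrite -dist_eq1 bc' dac.
have center y : y != b -> e b y.
  move=> yb; have [->|ya] := eqVneq y a; first by rewrite e_sym.
  have [->|yc] := eqVneq y c => //.
  by case: (four_point_midpoint fp dac ab bc ya yb yc).
have far_a z : z != b -> z != a -> d a z = 2.
  move=> zb za; have [->|zc] := eqVneq z c => //.
  by case: (four_point_midpoint fp dac ab bc za zb zc).
have far y z : y != b -> z != b -> y != z -> d y z = 2.
  move=> yb zb yz; have [eq_ya|ya] := eqVneq y a.
    by rewrite eq_ya far_a // -eq_ya eq_sym.
  have [eq_za|za] := eqVneq z a; first by rewrite eq_za distC far_a // -eq_za.
  have zy : z != y by rewrite eq_sym.
  by case: (four_point_midpoint fp (far_a y yb ya) ab (center y yb) za zb zy).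
left; exists b => u v uv; split.
  move=> uv'; apply/negPn/negP; rewrite negb_or => /andP [ub vb].
  by move: uv'; rewrite -dist_eq1 far.
by case/orP => /eqP eq_b; [rewrite eq_b | rewrite eq_b e_sym]; apply: center;
  rewrite -eq_b // eq_sym.
Qed.

Lemma star_additive : is_star e -> exists g, additive_dist g.
Proof.
case=> c star; exists (fun u => if u == c then 0 else 2) => u v uv /=.
have dc w : w != c -> d c w = 1.
  by move=> wc; apply/eqP; rewrite dist_eq1 star 1?eq_sym // eqxx.
have [eq_uc|uc] := eqVneq u c.
  have vc : v != c by rewrite -eq_uc eq_sym.
  by rewrite eq_uc dc // (negbTE vc).
have [eq_vc|vc] := eqVneq v c; first by rewrite eq_vc distC dc.
have not_uv : ~~ e u v by apply/negP => /(star u v uv); rewrite (negbTE uc) (negbTE vc).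
have := dist_triangle u c v; rewrite (distC u c) !dc //.
have : d u v != 0 by rewrite dist_eq0.
by rewrite -dist_eq1 in not_uv; lia.
Qed.

Lemma complete_additive : is_complete e -> exists g, additive_dist g.
Proof.
move=> complete; exists (fun _ => 1) => u v uv.
by have /eqP -> : d u v == 1 by rewrite dist_eq1 complete.
Qed.

Lemma sum_dist_pairs : \sum_u \sum_v d u v = 2 * Wiener e.
Proof.
have split_row u : \sum_v d u v = \sum_(v | enum_rank u < enum_rank v) d u v +
                                 \sum_(v | enum_rank v < enum_rank u) d u v.
  rewrite (bigID (fun v => enum_rank u < enum_rank v)) /=; congr (_ + _).
  rewrite (bigD1 u) ?ltnn //= distxx add0n; apply: eq_bigl => v.
  case: ltngtP => [//|lt_vu|/val_inj/enum_rank_inj ->]; last by rewrite eqxx.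
  by apply: contraTneq lt_vu => ->; rewrite ltnn.
rewrite (eq_bigr _ (fun u _ => split_row u)) big_split /= mul2n -addnn; congr (_ + _).
rewrite /Wiener (exchange_big_dep xpredT) //=.
by apply: eq_bigr => v _; apply: eq_big => // u _; apply: distC.
Qed.

Lemma sum_dist_sum k : \sum_(S : {set T} | #|S| == k.+2) dist_sum S =
  'C(#|T|.-2, k) * \sum_u \sum_v d u v.
Proof.
rewrite /dist_sum (exchange_big_dep xpredT) //=.
under eq_bigr do rewrite (exchange_big_dep xpredT) //=.
rewrite big_distrr; apply: eq_bigr => u _; rewrite big_distrr; apply: eq_bigr => v _.
have [<-|uv] := eqVneq u v; first by rewrite distxx /= muln0 big1.
rewrite sum_nat_const -(card_draws_pair k uv); congr (_ * _); apply: eq_card => S.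
by rewrite !inE andbA.
Qed.

Lemma Wtsp_leqif k : Wtsp e k.+2 * k.+1 <= 'C(#|T|.-2, k) * (2 * Wiener e)
  ?= iff [forall (S : {set T} | #|S| == k.+2), tsp e S * k.+1 == dist_sum S].
Proof.
rewrite -sum_dist_pairs -sum_dist_sum /Wtsp big_distrl /=.
apply: leqif_sum => S /eqP card_S; apply: leqif_eq.
by have := tsp_mul_le_dist_sum (S := S); rewrite card_S; apply.
Qed.

Lemma tsp_eq_dist_sum_iff k : k.+2 <= #|T| ->
  [forall (S : {set T} | #|S| == k.+2), tsp e S * k.+1 == dist_sum S] <->
  [\/ k.+2 = 2, k.+2 = 3 | 3 < k.+2 /\ (is_star e \/ is_complete e)].
Proof.
move=> k_le_T; split=> [/forall_inP tsp_eq | cases].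
  case: k k_le_T tsp_eq => [|[|k]] k_le_T tsp_eq; [by constructor 1|by constructor 2|].
  constructor 3; split=> //; apply/four_point_star_or_complete/(four_point_of_tsp_eq k_le_T).
  by move=> S card_S; apply/eqP/tsp_eq/eqP.
apply/forall_inP => S /eqP card_S; rewrite eqn_leq.
have := tsp_mul_le_dist_sum (S := S); rewrite card_S => -> //=.
have := dist_sum_le_tsp (S := S); rewrite card_S; apply.
case: cases => [->|->|[_ [/star_additive|/complete_additive] g_add]];
  by [constructor 1 | constructor 2 | constructor 3].
Qed.

End Distance.

(* Both sides count the triples (S, u, v) with #|S| = k.+2 and u != v in S. *)
Lemma bin_ordered_pairs n k : k.+2 <= n ->
  k.+2 * 'C(n, k.+2) * k.+1 = 'C(n.-2, k) * ('C(n, 2) * 2).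
Proof.
case: n => [|[|n]] // _ /=.
have h1 := mul_bin_diag n.+2 k.+1; have h2 := mul_bin_diag n.+1 k.
have h3 := mul_bin_diag n.+2 1; rewrite bin1 /= in h1 h2 h3.
by rewrite -h1 -mulnA [_ * k.+1]mulnC -h2 mulnA h3; ring.
Qed.

Local Open Scope ring_scope.

Theorem theorem3 (T : finType) (e : rel T)
  (e_sym : symmetric e) (e_irr : irreflexive e)
  (e_conn : forall u v : T, connect e u v)
  (k : nat) (hk : (2 <= k)%N) (hkn : (k <= #|T|)%N) :
  [/\ ((Wtsp e k)%:R : rat) <= (k * 'C(#|T|, k))%:R * mu e,
      (k * 'C(#|T|, k))%:R * mu e
        = 2%:R / (k.-1)%:R * ('C(#|T|.-2, k.-2))%:R * (Wiener e)%:R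
    & (((Wtsp e k)%:R : rat) = (k * 'C(#|T|, k))%:R * mu e
        <-> [\/ k = 2%N, k = 3%N | (3 < k)%N /\ (is_star e \/ is_complete e)])].
Proof.
case: k hk hkn => [|[|k]] // _ hkn.
have [le_W eq_W] := Wtsp_leqif e_sym e_conn k.
set X := ('C(#|T|.-2, k) * (2 * Wiener e))%N in le_W eq_W.
have mu_val : (k.+2 * 'C(#|T|, k.+2))%:R * mu e = X%:R / k.+1%:R :> rat.
  have C2_gt0 : (0 < 'C(#|T|, 2))%N by rewrite bin_gt0 (leq_trans _ hkn).
  apply/eqP; rewrite /mu mulrA eqr_div ?pnatr_eq0 -?lt0n // -!natrM eqr_nat.
  by rewrite mulnAC bin_ordered_pairs // /X; apply/eqP; ring.
rewrite mu_val; split.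
- by rewrite ler_pdivlMr ?ltr0n // -natrM ler_nat.
- by rewrite /X !natrM /=; field; rewrite addrC natr1 pnatr_eq0.
rewrite -(tsp_eq_dist_sum_iff e_sym e_irr e_conn hkn) -eq_W.
split=> [eq_N | /eqP <-]; last by rewrite natrM mulfK ?pnatr_eq0.
by rewrite -(eqr_nat rat) natrM eq_N mulfVK ?pnatr_eq0.
Qed.
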